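(* Let $n,k\in \mathbb{N}$ with $k \geq 2$ and $\Sigma=\{1,\dots,k\}$. Then (a) if $n$ is even, $|L^{\mathrm{even}}_{n,k}| \geq k^n \cdot 2^{1-k}$; (b) if $n \geq k \ln k$, then $|L^{q}_{n,k}| \leq k^n \cdot 2^{2-k}$ for every $q \in \{0,1\}^k$.
   Context: For $q=(q_1,\dots,q_k)\in\{0,1\}^k$, $L^{q}_{n,k}=\{w\in\Sigma^n : |w|_j\equiv q_j \pmod 2 \text{ for all } j\in\Sigma\}$, where $|w|_j$ is the number of occurrences of letter $j$ in $w$; $L^{\mathrm{even}}_{n,k}=L^{\vec 0}_{n,k}$ is the set of words in $\Sigma^n$ in which every letter occurs an even number of times. *)

From mathcomp Require Import all_boot.
From Stdlib Require Import Reals.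
Set Implicit Arguments. Unset Strict Implicit. Unset Printing Implicit Defensive.

(* Alphabet Sigma = {1,...,k} is represented by 'I_k; words of length n are
   n.-tuples over 'I_k.  |w|_j = count_mem j w. *)
Definition L_par (n k : nat) (q : {ffun 'I_k -> bool}) : {set n.-tuple 'I_k} :=
  [set w : n.-tuple 'I_k | [forall j : 'I_k, odd (count_mem j w) == q j]].

Definition L_even (n k : nat) : {set n.-tuple 'I_k} :=
  L_par n [ffun _ => false].

From mathcomp Require Import all_boot all_order all_algebra.
From Stdlib Require Import Reals Lra.
Set Implicit Arguments. Unset Strict Implicit. Unset Printing Implicit Defensive.
Import Order.TTheory GRing.Theory Num.Theory.

(* Fourier analysis on (Z/2)^k.  For a sign vector s in {0,1}^k put
   sigma(s) = sum_j (-1)^(s_j) and chi_q(s) = (-1)^(sum_j s_j q_j).  Expanding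
   sigma(s)^n over words and summing over s detects the parities of the letters:
     2^k |L^q_{n,k}| = sum_s chi_q(s) sigma(s)^n.
   (a) For q = 0 and n even all terms are nonnegative, and s = 0, s = 1 already
   contribute k^n each.
   (b) If s has t ones then |sigma(s)| = |k - 2t|, and for m = min(t, k - t),
   (1 - 2m/k)^n <= exp(-2mn/k) <= k^(-2m) as soon as n >= k ln k.  Summing over s
   gives at most 2 k^n (1 + k^-2)^k <= 2 e^(1/k) k^n <= 4 k^n. *)

Section RealEstimates.
Local Open Scope R_scope.

Lemma exp_le_exp x y : x <= y -> exp x <= exp y.
Proof.
by case/Rle_lt_or_eq_dec => [/exp_increasing/Rlt_le | ->] //; apply: Rle_refl.
Qed.

Lemma pow_le_exp (x : R) (n : nat) : -1 <= x -> (1 + x) ^ n <= exp (INR n * x).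
Proof.
move=> x_ge; rewrite -[x in INR n * x]ln_exp.
rewrite -/(Rpower (exp x) (INR n)) Rpower_pow; last exact: exp_pos.
by apply: pow_incr; split; [lra | apply: exp_ineq1_le].
Qed.

Lemma sub_double_pow_mul_le (K : R) (b n : nat) :
  0 < K -> 2 * INR b <= K -> K * ln K <= INR n ->
  (K - 2 * INR b) ^ n * K ^ (2 * b) <= K ^ n.
Proof.
move=> K_gt0 bK nK; set u := 2 * INR b / K.
have u_ge0 : 0 <= u by apply: Rle_mult_inv_pos; [have := pos_INR b; lra | lra].
have u_le1 : u <= 1.
  by apply: (Rmult_le_reg_r K) => //; rewrite /u; field_simplify; lra.
have -> : K - 2 * INR b = K * (1 + - u) by rewrite /u; field; lra.
rewrite Rpow_mult_distr Rmult_assoc -[X in _ <= X]Rmult_1_r.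
apply: Rmult_le_compat_l; first by apply: pow_le; lra.
rewrite -[K ^ _]Rpower_pow // /Rpower.
have -> : INR (2 * b) = u * K by rewrite /u -multE mult_INR /=; field; lra.
apply: Rle_trans (Rmult_le_compat_r _ _ _ (Rlt_le _ _ (exp_pos _))
                   (pow_le_exp n (_ : -1 <= - u))) _; first lra.
rewrite -exp_plus -exp_0; apply: exp_le_exp.
have := Rmult_le_compat_l _ _ _ u_ge0 nK; lra.
Qed.

Lemma one_add_sq_pow_le (k : nat) :
  2 <= INR k -> (1 + INR k ^ 2) ^ k <= 2 * INR k ^ (2 * k).
Proof.
move=> k_ge2; set K := INR k in k_ge2 *.
have -> : 1 + K ^ 2 = K ^ 2 * (1 + / K ^ 2) by field; lra.
rewrite Rpow_mult_distr -pow_mult Rmult_comm.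
apply: Rmult_le_compat_r; first by apply: pow_le; lra.
have invK2_gt0 : 0 < / K ^ 2 by apply: Rinv_0_lt_compat; nra.
apply: Rle_trans (pow_le_exp k (_ : -1 <= / K ^ 2)) _; first lra.
have -> : K * / K ^ 2 = / K by field; lra.
rewrite -[2 in X in _ <= X]exp_ln; last lra.
apply: exp_le_exp.
have := ln_lt_2; have : / K <= / 2 by apply: Rinv_le_contravar; lra.
lra.
Qed.

End RealEstimates.

(* With [Reals] imported last, [_ ^ _] in nat_scope is [Nat.pow] (as in the
   statement of [lemma7p4]) and [%N] no longer selects nat_scope, hence [%nat];
   [Import ssrnat] restores MathComp's [expn] locally. *)
Lemma natpowE (m n : nat) : m ^ n = expn m n.
Proof. by elim: n => [|n IHn] //=; rewrite expnS IHn. Qed.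

Section NatEstimates.
Import ssrnat.

Lemma INR_expn m n : INR (m ^ n) = (INR m ^ n)%R.
Proof. by rewrite -natpowE pow_INR. Qed.

Lemma sub_double_expn_mul_le (k b n : nat) : 0 < k -> 2 * b <= k ->
  (INR k * ln (INR k) <= INR n)%R -> (k - 2 * b) ^ n * k ^ (2 * b) <= k ^ n.
Proof.
move=> k_gt0 bk nk; have bkR : (2 * INR b <= INR k)%R.
  by move/leP/le_INR: bk; rewrite -multE mult_INR.
apply/leP/INR_le; rewrite -multE mult_INR !INR_expn minus_INR; last exact/leP.
by rewrite mult_INR; apply: sub_double_pow_mul_le => //; apply/lt_0_INR/ltP.
Qed.

Lemma distn_expn_mul_le (a b n : nat) (k := a + b) : 0 < k ->
  (INR k * ln (INR k) <= INR n)%R ->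
  `|a - b| ^ n * k ^ (2 * k) <= k ^ n * (k ^ (2 * a) + k ^ (2 * b)).
Proof.
rewrite {}/k; wlog le_ba : a b / b <= a => [wlog_ba|].
  case: (leqP b a) => [/wlog_ba//|/ltnW le_ab].
  by move: (wlog_ba b a le_ab); rewrite distnC [b + a]addnC [_ ^ (2 * b) + _]addnC.
set k := a + b => k_gt0 nk.
rewrite distnEl // mulnDr; apply: leq_trans (leq_addr _ _).
have -> : k ^ (2 * k) = k ^ (2 * b) * k ^ (2 * a) by rewrite -expnD -mulnDr addnC.
have -> : a - b = k - 2 * b by rewrite /k mul2n -addnn subnDr.
by rewrite mulnA leq_mul2r sub_double_expn_mul_le ?orbT // /k mul2n -addnn leq_add2r.
Qed.

Lemma one_add_sq_expn_le (k : nat) : 2 <= k -> (1 + k ^ 2) ^ k <= 2 * k ^ (2 * k).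
Proof.
move=> k_ge2; apply/leP/INR_le.
rewrite -multE mult_INR !INR_expn -plusE plus_INR INR_expn.
by apply: one_add_sq_pow_le; apply: (le_INR 2); apply/leP.
Qed.

End NatEstimates.

Section BigOps.
Local Open Scope ring_scope.
Variables (R : comPzSemiRingType) (I : finType).

Lemma sum_ffun_prod (x y : I -> R) :
  \sum_(s : {ffun I -> bool}) \prod_j (if s j then y j else x j) = \prod_j (x j + y j).
Proof.
rewrite (eq_bigr (fun j => \sum_(b : bool) if b then y j else x j)).
  by rewrite bigA_distr_bigA.
by move=> j _; rewrite big_bool addrC.
Qed.

Lemma prod_seq_count (F : I -> R) (w : seq I) :
  \prod_(x <- w) F x = \prod_j F j ^+ count_mem j w.
Proof.
rewrite -prodr_undup_exp_count (big_uniq _ (undup_uniq w)).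
rewrite [RHS](bigID (mem (undup w))) /=.
rewrite [X in _ * X]big1 ?mulr1 // => j; rewrite mem_undup => /count_memPn ->.
by rewrite expr0.
Qed.

Lemma expr_sum_tuples (a : I -> R) (n : nat) :
  (\sum_j a j) ^+ n = \sum_(w : n.-tuple I) \prod_(x <- w) a x.
Proof.
rewrite -[n in LHS]card_ord -prodr_const bigA_distr_bigA /=.
rewrite (reindex (fun w : n.-tuple I => [ffun i => tnth w i])) /=.
  by apply: eq_bigr => w _; rewrite big_tuple; apply: eq_bigr => i _; rewrite ffunE.
exists (fun f : {ffun 'I_n -> I} => [tuple f i | i < n]) => [w _ | f _].
  by apply: eq_from_tnth => i; rewrite tnth_mktuple ffunE.
by apply/ffunP => i; rewrite ffunE tnth_mktuple.
Qed.

End BigOps.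

Section SignVectors.
Local Open Scope ring_scope.
Variable I : finType.
Implicit Types q s : {ffun I -> bool}.

Definition ntrue s : nat := \sum_j s j.
Definition nfalse s : nat := \sum_j ~~ s j.

Lemma nfalse_add_ntrue s : (nfalse s + ntrue s)%nat = #|I|.
Proof.
rewrite -big_split /= -sum1_card; apply: eq_bigr => j _.
by case: (s j).
Qed.

Lemma sum_ffun_expr_ntrue_nfalse (R : comPzSemiRingType) (x y : R) :
  \sum_(s : {ffun I -> bool}) x ^+ ntrue s * y ^+ nfalse s = (y + x) ^+ #|I|.
Proof.
rewrite -prodr_const -sum_ffun_prod; apply: eq_bigr => s _.
rewrite -!prodrXr -big_split; apply: eq_bigr => j _.
by case: (s j); rewrite /= ?mulr1 ?mul1r.
Qed.

Definition sign_sum s : int := \sum_j (-1) ^+ s j.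

Lemma sign_sumE s : sign_sum s = (nfalse s)%:R - (ntrue s)%:R.
Proof. by rewrite !natr_sum -sumrB; apply: eq_bigr => j _; case: (s j). Qed.

Definition parity_char q s : int := (-1) ^+ (\sum_j (s j && q j)).

Lemma sum_parity_char_mul_prod q (c : I -> nat) :
  \sum_s parity_char q s * \prod_j ((-1) ^+ s j) ^+ c j
  = if [forall j, odd (c j) == q j] then 2 ^+ #|I| else 0.
Proof.
transitivity (\prod_j (1 + (-1) ^+ q j * (-1) ^+ c j) : int).
  rewrite -sum_ffun_prod; apply: eq_bigr => s _.
  rewrite /parity_char -prodrXr -big_split; apply: eq_bigr => j _ /=.
  by case: (s j); rewrite /= ?expr1n ?mulr1.
have signE j : (-1) ^+ q j * (-1) ^+ c j = (-1) ^+ (odd (c j) != q j) :> int.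
  rewrite -[(-1) ^+ c j]signr_odd.
  by case: (q j); case: (odd _); rewrite /= ?mulrNN ?mulr1 ?mul1r.
under eq_bigr do rewrite signE.
case: ifP => [/forallP c_q | /negbT/forallPn [j c_q_j]].
  by rewrite -prodr_const; apply: eq_bigr => j _; rewrite c_q.
by rewrite (bigD1 j) //= c_q_j subrr mul0r.
Qed.

Lemma norm_sign_sum_expr_mul_le s (n : nat) : (0 < #|I|)%nat ->
  (INR #|I| * ln (INR #|I|) <= INR n)%R ->
  `|sign_sum s| ^+ n * #|I|%:R ^+ (2 * #|I|)%nat
    <= #|I|%:R ^+ n * (#|I|%:R ^+ (2 * nfalse s)%nat + #|I|%:R ^+ (2 * ntrue s)%nat).
Proof.
rewrite -(nfalse_add_ntrue s) => I_gt0 nI.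
have -> : `|sign_sum s| = (absz ((nfalse s)%:Z - (ntrue s)%:Z))%:R.
  by rewrite sign_sumE !natz abszE.
rewrite -!natrX -natrD -!natrM ler_nat.
exact: distn_expn_mul_le.
Qed.

Lemma sum_norm_sign_sum_expr_le (n : nat) : (2 <= #|I|)%nat ->
  (INR #|I| * ln (INR #|I|) <= INR n)%R ->
  \sum_s `|sign_sum s| ^+ n <= 4 * #|I|%:R ^+ n.
Proof.
move=> I_ge2 nI; have I_gt0 := ltnW I_ge2.
have powI_gt0 : 0 < #|I|%:R ^+ (2 * #|I|)%nat :> int by rewrite exprn_gt0 // ltr0n.
rewrite -(ler_pM2r powI_gt0) mulr_suml.
apply: le_trans (ler_sum _ (fun s _ => norm_sign_sum_expr_mul_le s I_gt0 nI)) _.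
rewrite -mulr_sumr big_split /=.
have sum_expr_nfalse (x : int) : \sum_s x ^+ nfalse s = (x + 1) ^+ #|I|.
  by rewrite -sum_ffun_expr_ntrue_nfalse; apply: eq_bigr => s _; rewrite expr1n mul1r.
have sum_expr_ntrue (x : int) : \sum_s x ^+ ntrue s = (1 + x) ^+ #|I|.
  by rewrite -sum_ffun_expr_ntrue_nfalse; apply: eq_bigr => s _; rewrite expr1n mulr1.
under eq_bigr do rewrite exprM.
under [X in _ + X]eq_bigr do rewrite exprM.
rewrite sum_expr_nfalse sum_expr_ntrue [_ + 1]addrC [4 * _]mulrC -mulrA.
rewrite ler_pM2l ?exprn_gt0 ?ltr0n //.
have := one_add_sq_expn_le I_ge2.
rewrite -(ler_nat int) natrM !natrX natrD natrX => sq_bound.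
by rewrite (_ : 4 = 2 + 2) // mulrDl lerD.
Qed.

End SignVectors.

Section ParityLanguages.
Local Open Scope ring_scope.

Lemma card_L_par_mul_exp2 (n k : nat) (q : {ffun 'I_k -> bool}) :
  #|L_par n q|%:R * 2 ^+ k = \sum_s parity_char q s * sign_sum s ^+ n :> int.
Proof.
under eq_bigr do rewrite /sign_sum expr_sum_tuples mulr_sumr.
rewrite exchange_big /= mulr_natl -sumr_const big_mkcond /=.
apply: eq_bigr => w _.
under eq_bigr do rewrite prod_seq_count.
by rewrite sum_parity_char_mul_prod card_ord inE.
Qed.

Lemma card_L_even_ge (n k : nat) : ~~ odd n -> (0 < k)%nat ->
  k%:R ^+ n <= #|L_even n k|%:R * 2 ^+ (k - 1) :> int.
Proof.
move=> n_even k_gt0.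
rewrite -(@ler_pM2l _ 2) // mulrCA -exprS subn1 prednK // card_L_par_mul_exp2.
set sF : {ffun 'I_k -> bool} := [ffun=> false].
set sT : {ffun 'I_k -> bool} := [ffun=> true].
have char0 s : parity_char sF s = 1.
  by rewrite /parity_char big1 // => j _; rewrite ffunE andbF.
have sT_sF : sT != sF by apply/eqP => /ffunP/(_ (Ordinal k_gt0)); rewrite !ffunE.
have sign_sumF : sign_sum sF = k%:R.
  by rewrite /sign_sum (eq_bigr (fun=> 1)) ?sumr_const ?card_ord // => j _; rewrite ffunE.
have sign_sumT : sign_sum sT = - k%:R.
  rewrite /sign_sum (eq_bigr (fun=> -1)) ?sumr_const ?card_ord ?mulNrn //.
  by move=> j _; rewrite ffunE.
rewrite (bigD1 sF) // (bigD1 sT) //= !char0 !mul1r sign_sumF sign_sumT.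
rewrite exprNn -signr_odd (negbTE n_even) mul1r addrA mulr_natl mulr2n lerDl.
by apply: sumr_ge0 => s _; rewrite char0 mul1r exprn_even_ge0.
Qed.

Lemma card_L_par_le (n k : nat) (q : {ffun 'I_k -> bool}) : (2 <= k)%nat ->
  (INR k * ln (INR k) <= INR n)%R -> #|L_par n q|%:R * 2 ^+ (k - 2) <= k%:R ^+ n :> int.
Proof.
move=> k_ge2 nk.
rewrite -(@ler_pM2l _ 4) // mulrCA (_ : 4 = 2 ^+ 2) // -exprD subnKC // card_L_par_mul_exp2.
have := sum_norm_sign_sum_expr_le (I := 'I_k); rewrite card_ord => /(_ _ k_ge2 nk).
apply: le_trans; apply: le_trans (ler_norm _) _; apply: le_trans (ler_norm_sum _ _ _) _.
apply: ler_sum => s _.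
by rewrite normrM normrX /parity_char normrX normrN1 !expr1n mul1r.
Qed.

End ParityLanguages.

Theorem lemma7p4 (n k : nat) (hk : 2 <= k) :
  (~~ odd n -> k ^ n <= #|L_even n k| * 2 ^ (k - 1)) /\
  ((INR k * ln (INR k) <= INR n)%R ->
     forall q : {ffun 'I_k -> bool}, #|L_par n q| * 2 ^ (k - 2) <= k ^ n).
Proof.
split => [n_even | nk q]; rewrite !natpowE -(ler_nat int) natrM !natrX.
- exact: card_L_even_ge n_even (ltnW hk).
- exact: card_L_par_le q hk nk.
Qed.
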